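(* Let $\{N_i(t_i),t_i\ge0\}$, $i=1,\dots,d$, be independent simple counting processes, $\mathcal{F}^{(i)}(t_i)=\sigma(N_i(s_i),s_i\le t_i)$, and $\mathcal{F}(\mathbf{t})=\bigvee_{i=1}^d\mathcal{F}^{(i)}(t_i)$ for $\mathbf{t}=(t_1,\dots,t_d)\in\mathbb{R}^d_+$. For $\boldsymbol{\Lambda}=(\lambda_1,\dots,\lambda_d)$ with all $\lambda_i>0$, let $Y(\mathbf{t})=\sum_{i=1}^dN_i(t_i)\ln(u)-\boldsymbol{\Lambda}\cdot\mathbf{t}\,(u-1)$, $0<u\le1$. Then $\{\exp(Y(\mathbf{t})),\mathbf{t}\in\mathbb{R}^d_+\}$ is a multiparameter martingale with respect to $\{\mathcal{F}(\mathbf{t})\}$ (for every $u\in(0,1]$) if and only if $\{\sum_{i=1}^dN_i(t_i),\mathbf{t}\in\mathbb{R}^d_+\}$ is a multiparameter Poisson process with transition parameter $\boldsymbol{\Lambda}$.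
   Context: $\boldsymbol{\Lambda}\cdot\mathbf{t}=\sum_i\lambda_it_i$; $\preceq$ is the componentwise order, $\prec$ the strict relation. A simple counting process is a nonnegative-integer-valued, nondecreasing process starting at 0 with jumps of size 1. A multiparameter Poisson process with transition parameter $\boldsymbol{\Lambda}$ is a nonnegative-integer-valued random field on $\mathbb{R}^d_+$, 0 at $\mathbf{0}$, nondecreasing in $\preceq$, with independent increments along chains $\mathbf{0}=\mathbf{t}^{(0)}\prec\dots\prec\mathbf{t}^{(m)}$, stationary increments, and $\mathcal{N}(\mathbf{t})\sim$ Poisson$(\boldsymbol{\Lambda}\cdot\mathbf{t})$. A multiparameter martingale w.r.t. a filtration increasing in $\preceq$ is an integrable adapted process with $\mathbb{E}(M(\mathbf{t})\mid\mathcal{F}(\mathbf{s}))=M(\mathbf{s})$ a.s. for $\mathbf{s}\preceq\mathbf{t}$. *)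

From HB Require Import structures.
From mathcomp Require Import all_boot all_order all_algebra.
From mathcomp Require Import all_classical all_reals all_analysis.
Set Implicit Arguments. Unset Strict Implicit. Unset Printing Implicit Defensive.
Import Order.TTheory GRing.Theory Num.Theory.
Local Open Scope classical_set_scope.
Local Open Scope ring_scope.

Section Defs.
Variables (dsp : measure_display) (T : measurableType dsp) (R : realType).
Variable (P : probability T R).

Definition nonneg_pt (dim : nat) (t : 'I_dim -> R) := forall i, 0 <= t i.
Definition pt_le (dim : nat) (s t : 'I_dim -> R) := forall i, s i <= t i.
Definition pt_lt (dim : nat) (s t : 'I_dim -> R) := pt_le s t /\ s <> t.
Definition pt_dot (dim : nat) (L t : 'I_dim -> R) := \sum_(i < dim) L i * t i.

Definition simple_counting_process (N : R -> T -> nat) :=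
  (forall t k, 0 <= t -> measurable [set w | N t w = k]) /\
  (forall w, N 0 w = 0%N) /\
  (forall w s t, 0 <= s -> s <= t -> (N s w <= N t w)%N) /\
  (* jumps of size one: the total jump across any time t is at most 1 *)
  (forall w t, 0 <= t -> exists2 e : R, 0 < e &
     forall s s', 0 <= s -> t - e < s -> s <= t -> t <= s' -> s' < t + e ->
       (N s' w <= (N s w).+1)%N).

Definition natural_sigma (N : R -> T -> nat) (t : R) : set (set T) :=
  <<s setT, [set A | exists s (B : set nat), 0 <= s /\ s <= t /\
                          A = N s @^-1` B] >>.

Definition process_sigma (N : R -> T -> nat) : set (set T) :=
  <<s setT, [set A | exists s (B : set nat), 0 <= s /\ A = N s @^-1` B] >>.

Definition independent_processes (dim : nat) (N : 'I_dim -> R -> T -> nat) :=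
  forall A : 'I_dim -> set T, (forall i, process_sigma (N i) (A i)) ->
    P (\bigcap_(i in [set: 'I_dim]) A i) = (\prod_(i < dim) P (A i))%E.

Definition joint_filtration (dim : nat) (N : 'I_dim -> R -> T -> nat)
  (t : 'I_dim -> R) : set (set T) :=
  <<s setT, [set A | exists i s (B : set nat), 0 <= s /\ s <= t i /\
                          A = N i s @^-1` B] >>.

(* multiparameter martingale w.r.t. a filtration F (increasing in pt_le);
   E(M t | F s) = M s a.s. is written out as the defining property of the
   conditional expectation (M s being F s-measurable and integrable). *)
Definition mp_martingale (dim : nat) (F : ('I_dim -> R) -> set (set T))
  (M : ('I_dim -> R) -> T -> R) :=
  (forall t, nonneg_pt t -> P.-integrable setT (fun w => (M t w)%:E)) /\
  (forall t, nonneg_pt t -> forall B : set R, measurable B ->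
      F t (M t @^-1` B)) /\
  (forall s t, nonneg_pt s -> pt_le s t -> forall A, F s A ->
      (\int[P]_(w in A) (M t w)%:E = \int[P]_(w in A) (M s w)%:E)%E).

Definition independent_rvs (m : nat) (X : 'I_m -> T -> nat) :=
  forall B : 'I_m -> set nat,
    P (\bigcap_(k in [set: 'I_m]) (X k @^-1` B k)) =
    (\prod_(k < m) P (X k @^-1` B k))%E.

Definition mp_poisson (dim : nat) (L : 'I_dim -> R)
  (S : ('I_dim -> R) -> T -> nat) :=
  (forall t k, nonneg_pt t -> measurable [set w | S t w = k]) /\
  (forall w, S (fun _ => 0) w = 0%N) /\
  (forall w s t, nonneg_pt s -> pt_le s t -> (S s w <= S t w)%N) /\
  (forall (m : nat) (c : nat -> 'I_dim -> R),
      c 0%N = (fun _ => 0) -> (forall k, (k < m)%N -> pt_lt (c k) (c k.+1)) ->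
      independent_rvs (fun (k : 'I_m) w => (S (c k.+1) w - S (c k) w)%N)) /\
  (forall s t s' t', nonneg_pt s -> pt_le s t -> nonneg_pt s' -> pt_le s' t' ->
      (forall i, t i - s i = t' i - s' i) ->
      forall B : set nat,
        P [set w | B (S t w - S s w)%N] = P [set w | B (S t' w - S s' w)%N]) /\
  (forall t k, nonneg_pt t ->
      P [set w | S t w = k] =
      (expR (- pt_dot L t) * (pt_dot L t) ^+ k / (k`!)%:R)%:E).

End Defs.

(* Write S(t) = N_1(t_1) + ... + N_d(t_d), so that exp(Y(t)) = u^S(t) e^(-L.t (u-1)).
   Fix s <= t and an event B of F(s) on which S(s) is constant.  On B the
   martingale identity equates sum_m u^m P(B /\ {S(t) - S(s) = m}) with
   P(B) e^(L.(t-s) (u-1)), which is P(B) times the generating function of the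
   Poisson law of mean L.(t-s).  Generating functions on (0,1] determine their
   coefficients, so the martingale property for every u says exactly that
   S(t) - S(s) is Poisson(L.(t-s)) and independent of F(s).  This yields the
   axioms of a multiparameter Poisson process.
   Conversely, if S is a multiparameter Poisson process, the increments of S
   along the i-th axis are those of N_i, so N_i(t_i) - N_i(s_i) is independent
   of the values of N_i before s_i.  Together with the independence of the N_i
   this makes S(t) - S(s) independent of the pi-system of finite-dimensional
   past events, hence of F(s) by Dynkin's theorem, while stationarity and the
   Poisson marginals give its law. *)

From HB Require Import structures.
From mathcomp Require Import all_boot all_order all_algebra.
From mathcomp Require Import all_classical all_reals all_analysis.
From mathcomp Require Import measurable_realfun ring lra.
Import Order.TTheory GRing.Theory Num.Theory.
Import numFieldNormedType.Exports.
Local Open Scope classical_set_scope.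
Local Open Scope ring_scope.
Set Implicit Arguments. Unset Strict Implicit. Unset Printing Implicit Defensive.

Lemma bigcup_pickle {T : Type} (I : countType) (F : I -> set T) :
  \bigcup_(i in setT) F i = \bigcup_n (if @pickle_inv I n is Some i then F i else set0).
Proof.
apply/seteqP; split=> w /=.
  by move=> [i _ Fw]; exists (pickle i) => //; rewrite pickleK_inv.
by move=> [n _]; case: pickle_inv => // i Fw; exists i.
Qed.

Section sigma_algebra_closure.
Context {T : Type} (G : set (set T)).
Hypothesis sG : sigma_algebra setT G.

Let sG_props := (sigma_algebraP (fun X (_ : G X) => @subsetT _ X)).1 sG.

Lemma sigma_algebra_setT : G setT.
Proof. by case: sG_props. Qed.

Lemma sigma_algebra_setI : setI_closed G.
Proof. by case: sG_props. Qed.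

Lemma sigma_algebra_setC A : G A -> G (~` A).
Proof. by rewrite -setTD; case: sG => _ + _; apply. Qed.

Lemma sigma_algebra_const (Q : Prop) : G [set _ | Q].
Proof.
have [q|nq] := pselect Q.
  by rewrite (_ : [set _ | Q] = setT); [exact: sigma_algebra_setT|apply/seteqP; split].
by rewrite (_ : [set _ | Q] = set0); [case: sG|apply/seteqP; split].
Qed.

Lemma sigma_algebra_bigcup_count (I : countType) (J : set I) (F : I -> set T) :
  (forall i, J i -> G (F i)) -> G (\bigcup_(i in J) F i).
Proof.
move=> GF; rewrite bigcup_mkcond bigcup_pickle; case: sG => G0 _; apply => n.
case: pickle_inv => [i|//]; case: ifPn => [/set_mem|_] //; exact: GF.
Qed.

Lemma sigma_algebra_bigcap_count (I : countType) (F : I -> set T) :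
  (forall i, G (F i)) -> G (\bigcap_(i in setT) F i).
Proof.
move=> GF; rewrite -[X in G X]setCK setC_bigcap; apply: sigma_algebra_setC.
by apply: sigma_algebra_bigcup_count => i _; apply: sigma_algebra_setC.
Qed.

End sigma_algebra_closure.

Section nat_valued.
Context {T : Type}.
Implicit Types (G : set (set T)) (X Y : T -> nat).

Definition nat_measurable G X := forall k, G [set w | X w = k].

Lemma nat_measurable_preimage G X B : sigma_algebra setT G ->
  nat_measurable G X -> G (X @^-1` B).
Proof.
move=> sG mX; have -> : X @^-1` B = \bigcup_(k in B) [set w | X w = k].
  by apply/seteqP; split=> [w Bw|w [k Bk /= Xw]]; [exists (X w)|rewrite /preimage /= Xw].
exact: sigma_algebra_bigcup_count.
Qed.

Lemma nat_measurable_op2 G X Y (h : nat -> nat -> nat) : sigma_algebra setT G ->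
  nat_measurable G X -> nat_measurable G Y -> nat_measurable G (fun w => h (X w) (Y w)).
Proof.
move=> sG mX mY k.
have -> : [set w | h (X w) (Y w) = k] =
    \bigcup_(j in setT) ([set w | Y w = j] `&` X @^-1` [set x | h x j = k]).
  by apply/seteqP; split=> [w hw|w [j _ [/= <-]]] //; exists (Y w).
apply: sigma_algebra_bigcup_count => // j _.
by apply: sigma_algebra_setI => //; apply: nat_measurable_preimage.
Qed.

Lemma nat_measurable_sum G (I : Type) (s : seq I) (X : I -> T -> nat) :
  sigma_algebra setT G -> (forall i, nat_measurable G (X i)) ->
  nat_measurable G (fun w => \sum_(i <- s) X i w)%N.
Proof.
move=> sG mX; elim: s => [|a s IH] k.
  by under eq_set do rewrite big_nil; exact: sigma_algebra_const.
under eq_set do rewrite big_cons.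
exact: (nat_measurable_op2 addn sG (mX a) IH).
Qed.

End nat_valued.

Lemma measurable_fun_nat_comp {d d' : measure_display} {T : measurableType d}
    {U : measurableType d'} (X : T -> nat) (g : nat -> U) (D : set T) :
  nat_measurable measurable X -> measurable_fun D (fun w => g (X w)).
Proof.
move=> mX mD Y _; apply: measurableI => //.
exact: (nat_measurable_preimage (g @^-1` Y) (sigma_algebra_measurable T) mX).
Qed.

Section partition_by_nat_rv.
Context {d : measure_display} {T : measurableType d} {R : realType}.
Variable mu : {measure set T -> \bar R}.
Variables (X : T -> nat) (A : set T).
Hypotheses (mX : nat_measurable measurable X) (mA : measurable A).

Let level_set k := A `&` [set w | X w = k].

Let A_bigcup_level : A = \bigcup_k level_set k.
Proof.
by apply/seteqP; split=> [w Aw|w [k _ []//]]; exists (X w).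
Qed.

Let measurable_level k : measurable (level_set k).
Proof. exact: measurableI. Qed.

Let trivIset_level : trivIset setT level_set.
Proof. by move=> i j _ _ [w [[_ <-] [_ <-]]]. Qed.

Lemma measure_nat_partition : mu A = (\sum_(k <oo) mu (A `&` [set w | X w = k]))%E.
Proof. by rewrite [in LHS]A_bigcup_level measure_semi_bigcup// -A_bigcup_level. Qed.

Lemma integral_nat_partition (f : T -> \bar R) : measurable_fun A f ->
  (forall w, A w -> 0 <= f w)%E ->
  (\int[mu]_(w in A) f w =
   \sum_(k <oo) \int[mu]_(w in A `&` [set w | X w = k]) f w)%E.
Proof.
by move=> mf f0; rewrite [in LHS]A_bigcup_level ge0_integral_bigcup// -A_bigcup_level.
Qed.

Lemma integral_nat_comp (g : nat -> \bar R) : (forall k, 0 <= g k)%E ->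
  (\int[mu]_(w in A) g (X w) =
   \sum_(k <oo) (g k * mu (A `&` [set w | X w = k])))%E.
Proof.
move=> g0; rewrite integral_nat_partition; first last.
- by move=> w _; exact: g0.
- exact: measurable_fun_nat_comp.
apply: eq_eseriesr => k _; rewrite -integral_cst; last exact: measurableI.
by apply: eq_integral => w; rewrite inE => -[_ /= ->].
Qed.

End partition_by_nat_rv.

Section independence_of_events.
Context {d : measure_display} {T : measurableType d} {R : realType}.
Variable P : probability T R.

Lemma probability_fin (A : set T) : measurable A -> P A = (fine (P A))%:E.
Proof.
move=> mA; rewrite fineK// ge0_fin_numE ?measure_ge0//.
exact: le_lt_trans (probability_le1 P mA) (ltry 1).
Qed.

Lemma const_event_indep (Q : Prop) (A : set T) :
  P ([set _ | Q] `&` A) = (P [set _ | Q] * P A)%E.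
Proof.
have [q|nq] := pselect Q.
  have -> : [set _ : T | Q] = setT by apply/seteqP; split.
  by rewrite setTI probability_setT mul1e.
have -> : [set _ : T | Q] = set0 by apply/seteqP; split.
by rewrite set0I measure0 mul0e.
Qed.

Lemma bigcup_indep (K : countType) (E : K -> set T) (A : set T) :
  (forall i, measurable (E i)) -> measurable A -> trivIset setT E ->
  (forall i, P (E i `&` A) = P (E i) * P A)%E ->
  P ((\bigcup_(i in setT) E i) `&` A) = (P (\bigcup_(i in setT) E i) * P A)%E.
Proof.
move=> mE mA tE EA.
pose F (n : nat) := if @pickle_inv K n is Some i then E i else set0.
have -> : \bigcup_(i in setT) E i = \bigcup_n F n by exact: bigcup_pickle.
have mF n : measurable (F n) by rewrite /F; case: pickle_inv.
have tF : trivIset setT F.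
  move=> m n _ _ [w []]; rewrite /F.
  case Em: pickle_inv => [i|//]; case En: pickle_inv => [j|//] Ei Ej.
  have eij : i = j by apply: tE => //; exists w.
  by have := @pickle_invK K m; have := @pickle_invK K n; rewrite Em En eij /= => -> ->.
rewrite setI_bigcupl measure_semi_bigcup//; first last.
- by apply: bigcup_measurable => n _; exact: measurableI.
- exact: trivIset_setIr.
- by move=> n; exact: measurableI.
rewrite measure_semi_bigcup//; last exact: bigcup_measurable.
rewrite (probability_fin mA) muleC -nneseriesZl//.
apply: eq_eseriesr => n _; rewrite -probability_fin// muleC /F.
by case: pickle_inv => [i|]; [exact: EA|rewrite set0I measure0 mul0e].
Qed.

Lemma setI_preimage_level (X : T -> nat) (B : set nat) k :
  X @^-1` B `&` [set w | X w = k] = if pselect (B k) then [set w | X w = k] else set0.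
Proof.
apply/seteqP; case: pselect => Bk; split=> w //=; first by case.
  by move=> Xw; split; rewrite // /preimage /= Xw.
by case=> Bw Xw; apply: Bk; rewrite -Xw.
Qed.

Variable X : T -> nat.
Hypothesis mX : nat_measurable measurable X.

Lemma eq_distribution_nat (Y : T -> nat) : nat_measurable measurable Y ->
  (forall k, P [set w | X w = k] = P [set w | Y w = k]) ->
  forall B, P (X @^-1` B) = P (Y @^-1` B).
Proof.
move=> mY XY B.
have mXB := nat_measurable_preimage B (sigma_algebra_measurable T) mX.
have mYB := nat_measurable_preimage B (sigma_algebra_measurable T) mY.
rewrite (measure_nat_partition P mX mXB) (measure_nat_partition P mY mYB).
apply: eq_eseriesr => k _; rewrite !setI_preimage_level.
by case: pselect => Bk; [exact: XY|rewrite !measure0].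
Qed.

Lemma indep_nat_preimage (A : set T) : measurable A ->
  (forall k, P (A `&` [set w | X w = k]) = P A * P [set w | X w = k])%E ->
  forall B, P (A `&` X @^-1` B) = (P A * P (X @^-1` B))%E.
Proof.
move=> mA AX B.
have mXB := nat_measurable_preimage B (sigma_algebra_measurable T) mX.
rewrite (measure_nat_partition P mX (measurableI _ _ mA mXB)).
rewrite (measure_nat_partition P mX mXB) (probability_fin mA) -nneseriesZl//.
apply: eq_eseriesr => k _; rewrite -setIA setI_preimage_level -probability_fin//.
by case: pselect => Bk; [exact: AX|rewrite setI0 !measure0 mule0].
Qed.

End independence_of_events.

Section independent_prefix.
Context {d : measure_display} {T : measurableType d} {R : realType}.
Variables (P : probability T R) (n : nat) (X : nat -> T -> nat).
Hypothesis mX : forall j, (j <= n)%N -> nat_measurable measurable (X j).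
Hypothesis iX : independent_rvs P (fun k : 'I_n.+1 => X k).

Let cyl (x : seq nat) := [set w | forall j, (j < n)%N -> X j w = nth 0%N x j].

Let measurable_cyl x : measurable (cyl x).
Proof.
have -> : cyl x = \bigcap_(j in [set: 'I_n]) [set w | X j w = nth 0%N x j].
  by apply/seteqP; split=> [w cw j _|w cw j jn]; [exact: cw|exact: (cw (Ordinal jn))].
apply: (sigma_algebra_bigcap_count (sigma_algebra_measurable T)) => j.
exact/mX/ltnW.
Qed.

Let cyl_last_prod x K : P (cyl x `&` X n @^-1` K) =
  ((\prod_(j < n) P [set w | X j w = nth 0%N x j]) * P (X n @^-1` K))%E.
Proof.
pose B (k : 'I_n.+1) := if (k < n)%N then [set nth 0%N x k] else K.
have := iX B; rewrite big_ord_recr /= /B ltnn.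
under [X in _ = (X * _)%E]eq_bigr => j _ do rewrite /= ltn_ord.
move=> <-; congr (P _); apply/seteqP; split=> [w [cw Kw] k _|w cw].
  rewrite /preimage /=; case: ifPn => [kn|]; first exact: cw.
  rewrite -leqNgt => nk; suff -> : k = ord_max by [].
  by apply/val_inj/anti_leq; rewrite nk andbT -ltnS ltn_ord.
split=> [j jn|]; first by have := cw (Ordinal (leqW jn)) I; rewrite /= jn.
by have := cw ord_max I; rewrite /= ltnn.
Qed.

Lemma independent_rvs_prefix (C : set (seq nat)) (K : set nat) :
  P ([set w | C (mkseq (X ^~ w) n)] `&` X n @^-1` K) =
  (P [set w | C (mkseq (X ^~ w) n)] * P (X n @^-1` K))%E.
Proof.
pose E x := [set w | (size x = n /\ C x) /\ cyl x w].
have -> : [set w | C (mkseq (X ^~ w) n)] = \bigcup_(x in setT) E x.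
  apply/seteqP; split=> [w Cw|w [x _ [[sx Cx] cw]]].
    exists (mkseq (X ^~ w) n) => //; split; first by rewrite size_mkseq.
    by move=> j jn; rewrite nth_mkseq.
  congr C: Cx; apply: (@eq_from_nth _ 0%N) => [|j]; rewrite ?size_mkseq sx// => jn.
  by rewrite nth_mkseq// cw.
have E_cyl x : E x = if pselect (size x = n /\ C x) then cyl x else set0.
  by apply/seteqP; case: pselect => Cx; split=> w //= [].
apply: bigcup_indep.
- by move=> x; rewrite E_cyl; case: pselect => Cx; [exact: measurable_cyl|exact: measurable0].
- exact: nat_measurable_preimage (sigma_algebra_measurable T) (mX (leqnn n)).
- move=> x y _ _ [w [[[sx _] cx] [[sy _] cy]]].
  by apply: (@eq_from_nth _ 0%N) => [|j]; rewrite ?sx ?sy// => jn; rewrite -cx// -cy.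
- move=> x; rewrite E_cyl; case: pselect => Cx; last by rewrite set0I !measure0 mul0e.
  rewrite cyl_last_prod -[in RHS](setIT (cyl x)) -(preimage_setT (X n)) cyl_last_prod.
  by rewrite probability_setT mule1.
Qed.

End independent_prefix.

Section poisson_mass.
Context {R : realType}.
Implicit Types (mu u : R) (a b : nat -> R).

(* Not the library's [poisson_pmf], which is constantly [1] at rate [0] and so
   cannot describe the increment over a degenerate box. *)
Definition poisson_mass mu (k : nat) : R := expR (- mu) * mu ^+ k / k`!%:R.

Lemma poisson_mass_ge0 mu k : 0 <= mu -> 0 <= poisson_mass mu k.
Proof. by move=> mu0; rewrite divr_ge0 ?mulr_ge0 ?expR_ge0 ?exprn_ge0. Qed.

Lemma poisson_pgf mu u : 0 <= mu -> 0 <= u ->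
  (expR (mu * (u - 1)))%:E = (\sum_(k <oo) (u ^+ k * poisson_mass mu k)%:E)%E.
Proof.
move=> mu0 u0.
have e k : u ^+ k * poisson_mass mu k = expR (- mu) * exp_coeff (mu * u) k.
  by rewrite /poisson_mass exp_coeffE exprMn; ring.
under eq_eseriesr do rewrite e EFinM.
rewrite nneseriesZl; last by move=> k _; rewrite lee_fin exp_coeff_ge0 ?mulr_ge0.
have -> : (\sum_(k <oo) (exp_coeff (mu * u) k)%:E)%E = (expR (mu * u))%:E.
  rewrite /expR -EFin_lim; last exact: is_cvg_series_exp_coeff.
  by congr (limn _); apply/funext => n; rewrite /series /= sumEFin.
by rewrite -EFinM -expRD mulrBr mulr1 addrC.
Qed.

Lemma poisson_mass_sum mu : 0 <= mu -> (\sum_(k <oo) (poisson_mass mu k)%:E)%E = 1%E.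
Proof.
move=> mu0; have := poisson_pgf mu0 ler01; rewrite subrr mulr0 expR0 => ->.
by apply: eq_eseriesr => k _; rewrite expr1n mul1r.
Qed.

End poisson_mass.

Section generating_function.
Context {R : realType}.
Implicit Types (a b : nat -> R) (u x C : R).

Definition pgf a u : \bar R := (\sum_(j <oo) (u ^+ j * a j)%:E)%E.

Lemma le0_of_le_mul_small x C : 0 <= C ->
  (forall u, 0 < u -> u <= 1 -> x <= u * C) -> x <= 0.
Proof.
move=> C0 xC; apply/ler_addgt0Pr => e e0; rewrite add0r.
pose u := Num.min 1 (e / (C + 1)).
have C1 : 0 < C + 1 by rewrite ltr_wpDl.
have u0 : 0 < u by rewrite lt_min ltr01 divr_gt0.
have u1 : u <= 1 by rewrite ge_min lexx.
have ue : u <= e / (C + 1) by rewrite ge_min lexx orbT.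
apply: (le_trans (xC u u0 u1)); apply: (le_trans (ler_wpM2r C0 ue)).
by rewrite mulrAC ler_pdivrMr// ler_wpM2l ?(ltW e0)// lerDl.
Qed.

Lemma eseries_recl (c : nat -> R) : (forall j, 0 <= c j) ->
  (\sum_(j <oo) (c j)%:E = (c 0%N)%:E + \sum_(j <oo) (c j.+1)%:E)%E.
Proof.
move=> c0; rewrite nneseries_recl => [|j _|//]; last by rewrite lee_fin.
congr (_ + _)%E; rewrite -(nneseries_addn 1) => [|j]; last by rewrite lee_fin.
by apply: eq_eseriesr => j _; rewrite addn1.
Qed.

Section nonneg_coefficients.
Variable a : nat -> R.
Hypothesis a0 : forall j, 0 <= a j.

Let term_ge0 u j : 0 <= u -> (0 <= (u ^+ j * a j)%:E)%E.
Proof. by move=> u0; rewrite lee_fin mulr_ge0// exprn_ge0. Qed.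

Lemma pgf_ge0 u : 0 <= u -> (0 <= pgf a u)%E.
Proof. by move=> u0; apply: nneseries_ge0 => j _ _; exact: term_ge0. Qed.

Lemma pgf_recl u : 0 <= u ->
  pgf a u = ((a 0%N)%:E + u%:E * pgf (fun j => a j.+1) u)%E.
Proof.
move=> u0; rewrite /pgf eseries_recl => [|j]; last by rewrite mulr_ge0// exprn_ge0.
rewrite expr0 mul1r -nneseriesZl => [|j _]; last by rewrite lee_fin mulr_ge0// exprn_ge0.
by congr (_ + _)%E; apply: eq_eseriesr => j _; rewrite -EFinM exprS mulrA.
Qed.

Lemma pgf_le u C : 0 <= u -> u <= 1 -> (\sum_(j <oo) (a j)%:E <= C%:E)%E ->
  (pgf a u <= C%:E)%E.
Proof.
move=> u0 u1; apply: le_trans; apply: lee_nneseries => [j _ _|j _]; first exact: term_ge0.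
by rewrite lee_fin ler_piMl// exprn_ile1.
Qed.

Lemma eseries_tail_le : (\sum_(j <oo) (a j.+1)%:E <= \sum_(j <oo) (a j)%:E)%E.
Proof. by rewrite [X in (_ <= X)%E]eseries_recl// leeDr// lee_fin. Qed.

End nonneg_coefficients.

Lemma pgf_eq_head_tail a b C : (forall j, 0 <= a j) -> (forall j, 0 <= b j) ->
  (\sum_(j <oo) (a j)%:E <= C%:E)%E -> (\sum_(j <oo) (b j)%:E <= C%:E)%E ->
  (forall u, 0 < u -> u <= 1 -> pgf a u = pgf b u) ->
  a 0%N = b 0%N /\
  (forall u, 0 < u -> u <= 1 -> pgf (fun j => a j.+1) u = pgf (fun j => b j.+1) u).
Proof.
move=> a0 b0 aC bC eqab.
have C0 : 0 <= C.
  by rewrite -lee_fin; apply: le_trans aC; apply: nneseries_ge0 => j _ _; rewrite lee_fin.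
have tail_real c u : (forall j, 0 <= c j) -> (\sum_(j <oo) (c j)%:E <= C%:E)%E ->
    0 < u -> u <= 1 ->
    exists2 y, pgf (fun j => c j.+1) u = y%:E & 0 <= y <= C.
  move=> c0 cC u0 u1.
  have y0 := pgf_ge0 (fun j => c0 j.+1) (ltW u0).
  have yC := pgf_le (fun j => c0 j.+1) (ltW u0) u1 (le_trans (eseries_tail_le c0) cC).
  have fin_y : pgf (fun j => c j.+1) u \is a fin_num.
    by rewrite ge0_fin_numE// (le_lt_trans yC (ltry _)).
  exists (fine (pgf (fun j => c j.+1) u)); first by rewrite fineK.
  by rewrite fine_ge0// -lee_fin fineK.
have step u : 0 < u -> u <= 1 -> exists ya yb, [/\ pgf (fun j => a j.+1) u = ya%:E,
    pgf (fun j => b j.+1) u = yb%:E, a 0%N + u * ya = b 0%N + u * yb,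
    0 <= ya <= C & 0 <= yb <= C].
  move=> u0 u1; have [ya eya yaC] := tail_real a u a0 aC u0 u1.
  have [yb eyb ybC] := tail_real b u b0 bC u0 u1.
  exists ya, yb; split=> //; apply/EFin_inj.
  by rewrite !EFinD !EFinM -eya -eyb -!pgf_recl// ?(ltW u0)// eqab.
have ab0 : a 0%N = b 0%N.
  apply/eqP; rewrite -subr_eq0 -normr_le0; apply: (le0_of_le_mul_small C0).
  move=> u u0 u1; have [ya [yb [_ _ e /andP[ya0 yaC] /andP[yb0 ybC]]]] := step u u0 u1.
  have -> : a 0%N - b 0%N = u * (yb - ya) by rewrite mulrBr; lra.
  by rewrite normrM gtr0_norm// ler_pM2l// ler_norml; apply/andP; split; lra.
split=> // u u0 u1; have [ya [yb [-> -> e _ _]]] := step u u0 u1.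
by congr EFin; apply: (mulfI (lt0r_neq0 u0)); apply: (addrI (a 0%N)); rewrite e ab0.
Qed.

Lemma pgf_inj a b C : (forall j, 0 <= a j) -> (forall j, 0 <= b j) ->
  (\sum_(j <oo) (a j)%:E <= C%:E)%E -> (\sum_(j <oo) (b j)%:E <= C%:E)%E ->
  (forall u, 0 < u -> u <= 1 -> pgf a u = pgf b u) -> a =1 b.
Proof.
move=> a0 b0 aC bC eqab m.
elim: m a b a0 b0 aC bC eqab => [|m IH] a b a0 b0 aC bC eqab.
  by have [] := pgf_eq_head_tail a0 b0 aC bC eqab.
have [_ eq_tail] := pgf_eq_head_tail a0 b0 aC bC eqab.
apply: (IH (fun j => a j.+1) (fun j => b j.+1)) => //.
- exact: le_trans (eseries_tail_le a0) aC.
- exact: le_trans (eseries_tail_le b0) bC.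
Qed.

End generating_function.

Lemma strict_grid {R : realType} (a b : R) (ps : seq R) : 0 < a -> a < b ->
  {in ps, forall r, 0 <= r <= a} ->
  exists n (g : nat -> R) (idx : R -> nat), [/\ g 0%N = 0, g n = a, g n.+1 = b,
    forall j, (j <= n)%N -> g j < g j.+1 &
    {in ps, forall r, (idx r <= n)%N /\ g (idx r) = r}].
Proof.
move=> a0 ab ps0a.
pose q := sort <=%R (undup [seq r <- ps | 0 < r < a]).
pose grid := 0 :: q ++ [:: a; b].
have size_grid : size grid = (size q).+3 by rewrite /= size_cat addn2.
have mem_q r : (r \in q) = (0 < r < a) && (r \in ps).
  by rewrite mem_sort mem_undup mem_filter.
have sorted_grid : sorted <%R grid.
  rewrite /grid (sorted_pairwise lt_trans) /= pairwise_cat -(sorted_pairwise lt_trans).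
  rewrite sort_lt_sorted ?undup_uniq //= ab !andbT all_cat /= a0 (lt_trans a0 ab) !andbT.
  apply/andP; split; apply/allP => r; rewrite mem_q => /andP[/andP[r0 ra] _] //.
  by apply/allP => y; rewrite !inE => /orP[]/eqP->//; exact: lt_trans ab.
have grid_a : nth 0 grid (size q).+1 = a by rewrite /grid /= nth_cat ltnn subnn.
have grid_b : nth 0 grid (size q).+2 = b.
  by rewrite /grid /= nth_cat ltnNge leqnSn /= subSnn.
exists (size q).+1, (nth 0 grid), (index ^~ grid); split=> //.
- move=> j jn; rewrite (lt_sorted_ltn_nth 0 sorted_grid) ?inE ?size_grid//.
  by rewrite ltnS (leq_trans jn).
move=> r ps_r; have /andP[r0 ra] := ps0a r ps_r.
have r_grid : r \in grid.
  rewrite /grid !(inE, mem_cat) mem_q ps_r andbT.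
  have [->//|r_neq0] := eqVneq r 0.
  have [->|r_neqa] := eqVneq r a; first by rewrite !orbT.
  by rewrite !lt_neqAle eq_sym r_neq0 r0 r_neqa ra orbT.
split; last exact: nth_index.
rewrite -ltnS ltn_neqAle -ltnS -size_grid index_mem r_grid andbT.
apply/eqP => e; move: (nth_index 0 r_grid); rewrite e grid_b => rb.
by move: ra; rewrite -rb leNgt ab.
Qed.

Section cylinder_events.
Context {R : realType}.
Implicit Types (l : seq (R * set nat)) (f g : R -> nat).

Fixpoint cyl_holds l f : Prop :=
  if l is y :: l' then y.2 (f y.1) /\ cyl_holds l' f else True.

Lemma cyl_holds_cat l1 l2 f : cyl_holds (l1 ++ l2) f <-> cyl_holds l1 f /\ cyl_holds l2 f.
Proof. by elim: l1 => [|y l1 IH] /=; [tauto|rewrite (propext IH); tauto]. Qed.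

Lemma eq_cyl_holds l f g : {in [seq y.1 | y <- l], f =1 g} -> cyl_holds l f = cyl_holds l g.
Proof.
elim: l => [//|y l IH] /= fg; rewrite fg ?mem_head// IH// => r rl.
by apply: fg; rewrite inE rl orbT.
Qed.

Lemma cyl_holds_measurable {T : Type} (G : set (set T)) (X : R -> T -> nat) l :
  sigma_algebra setT G -> {in [seq y.1 | y <- l], forall r, nat_measurable G (X r)} ->
  G [set w | cyl_holds l (X ^~ w)].
Proof.
move=> sG; elim: l => [|y l IH] /= mX; first exact: sigma_algebra_setT.
have -> : [set w | y.2 (X y.1 w) /\ cyl_holds l (X ^~ w)] =
    X y.1 @^-1` y.2 `&` [set w | cyl_holds l (X ^~ w)] by [].
apply: sigma_algebra_setI => //.
  by apply: nat_measurable_preimage => //; apply: mX; rewrite mem_head.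
by apply: IH => r rl; apply: mX; rewrite inE rl orbT.
Qed.

End cylinder_events.

Lemma EFin_mulIe {R : realType} (x : R) (y z : \bar R) : x != 0 ->
  (x%:E * y = x%:E * z)%E -> y = z.
Proof.
by move=> x0 /(congr1 (fun v => x^-1%:E * v)%E); rewrite !muleA -EFinM mulVf// !mul1e.
Qed.

Section counting_processes.
Context {d : measure_display} {T : measurableType d} {R : realType}.
Variables (P : probability T R) (dim : nat) (N : 'I_dim -> R -> T -> nat)
  (L : 'I_dim -> R).
Hypothesis N_counting : forall i, simple_counting_process (N i).
Hypothesis L_ge0 : forall i, 0 <= L i.
Implicit Types (s t : 'I_dim -> R) (A B : set T).

Lemma N_measurable i r : 0 <= r -> nat_measurable measurable (N i r).
Proof. by move=> r0 k; case: (N_counting i) => + _; apply. Qed.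

Lemma N0 i w : N i 0 w = 0%N.
Proof. by case: (N_counting i) => _ []. Qed.

Lemma N_homo i w r r' : 0 <= r -> r <= r' -> (N i r w <= N i r' w)%N.
Proof. by case: (N_counting i) => _ [_ [+ _]]; apply. Qed.

Lemma nonneg_pt_le s t : nonneg_pt s -> pt_le s t -> nonneg_pt t.
Proof. by move=> s0 st i; exact: le_trans (s0 i) (st i). Qed.

Lemma pt_le_refl t : pt_le t t.
Proof. by move=> i. Qed.

Definition Nsum t w := (\sum_(i < dim) N i (t i) w)%N.

Definition Nincr s t w := (Nsum t w - Nsum s w)%N.

Definition rate s t := pt_dot L t - pt_dot L s.

Definition expY (u : R) t w :=
  expR ((\sum_(i < dim) (N i (t i) w)%:R * ln u) - pt_dot L t * (u - 1)).

Definition expY_scale (u : R) t := expR (- pt_dot L t * (u - 1)).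

Lemma Nsum_homo s t w : nonneg_pt s -> pt_le s t -> (Nsum s w <= Nsum t w)%N.
Proof. by move=> s0 st; apply: leq_sum => i _; exact: N_homo. Qed.

Lemma rate_ge0 s t : pt_le s t -> 0 <= rate s t.
Proof.
move=> st; rewrite /rate /pt_dot -sumrB; apply: sumr_ge0 => i _.
by rewrite -mulrBr mulr_ge0// subr_ge0.
Qed.

Lemma expY_factor u t w : 0 < u ->
  expY u t w = u ^+ Nsum t w * expY_scale u t.
Proof.
move=> u0; rewrite /expY /expY_scale expRD mulNr -mulr_suml -natr_sum mulr_natl -lnXn//.
by rewrite lnK// posrE exprn_gt0.
Qed.

Section measurability.
Variable G : set (set T).
Hypothesis sG : sigma_algebra setT G.

Lemma Nsum_measurable_in t : (forall i, nat_measurable G (N i (t i))) ->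
  nat_measurable G (Nsum t).
Proof. by move=> mN; apply: nat_measurable_sum. Qed.

Lemma Nincr_measurable_in s t : (forall i, nat_measurable G (N i (s i))) ->
  (forall i, nat_measurable G (N i (t i))) -> nat_measurable G (Nincr s t).
Proof.
by move=> mNs mNt; apply: nat_measurable_op2 => //; apply: Nsum_measurable_in.
Qed.

End measurability.

Lemma Nsum_measurable t : nonneg_pt t -> nat_measurable measurable (Nsum t).
Proof.
by move=> t0; apply: (Nsum_measurable_in (sigma_algebra_measurable T)) => i; exact: N_measurable.
Qed.

Lemma Nincr_measurable s t : nonneg_pt s -> pt_le s t ->
  nat_measurable measurable (Nincr s t).
Proof.
move=> s0 st; have t0 := nonneg_pt_le s0 st.
by apply: (Nincr_measurable_in (sigma_algebra_measurable T)) => i; exact: N_measurable.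
Qed.

Lemma joint_filtration_sigma t : sigma_algebra setT (joint_filtration N t).
Proof. exact: smallest_sigma_algebra. Qed.

Lemma N_adapted t i r : 0 <= r -> r <= t i -> nat_measurable (joint_filtration N t) (N i r).
Proof. by move=> r0 rt k; apply: sub_sigma_algebra; exists i, r, [set k]. Qed.

Lemma Nsum_adapted s t : nonneg_pt s -> pt_le s t ->
  nat_measurable (joint_filtration N t) (Nsum s).
Proof.
by move=> s0 st; apply: (Nsum_measurable_in (joint_filtration_sigma t)) => i; exact: N_adapted.
Qed.

Lemma Nincr_adapted s t : nonneg_pt s -> pt_le s t ->
  nat_measurable (joint_filtration N t) (Nincr s t).
Proof.
move=> s0 st; apply: (Nincr_measurable_in (joint_filtration_sigma t)) => i.
  exact: N_adapted.
exact: N_adapted (le_trans (s0 i) (st i)) (lexx _).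
Qed.

Lemma joint_filtration_measurable t A : joint_filtration N t A -> measurable A.
Proof.
apply: smallest_sub; first exact: sigma_algebra_measurable.
move=> _ [i [r [B [r0 [_ ->]]]]].
exact: nat_measurable_preimage (sigma_algebra_measurable T) (N_measurable i r0).
Qed.

Lemma joint_filtration_homo s t : pt_le s t ->
  joint_filtration N s `<=` joint_filtration N t.
Proof.
move=> st; apply: smallest_sub; first exact: joint_filtration_sigma.
move=> _ [i [r [B [r0 [rs ->]]]]]; apply: sub_sigma_algebra.
by exists i, r, B; split=> //; split=> //; exact: le_trans rs (st i).
Qed.

Definition poisson_incr_indep s t A := forall m : nat,
  P (A `&` [set w | Nincr s t w = m]) = (P A * (poisson_mass (rate s t) m)%:E)%E.

Definition poisson_increments := forall s t, nonneg_pt s -> pt_le s t ->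
  forall A, joint_filtration N s A -> poisson_incr_indep s t A.

Section slice.
Variables (s t : 'I_dim -> R) (n : nat) (B : set T).
Hypotheses (s0 : nonneg_pt s) (st : pt_le s t) (mB : measurable B).
Hypothesis B_slice : B `<=` [set w | Nsum s w = n].

Let integral_expY_later u : 0 < u ->
  (\int[P]_(w in B) (expY u t w)%:E = (u ^+ n * expY_scale u t)%:E *
     pgf (fun m => fine (P (B `&` [set w | Nincr s t w = m]))) u)%E.
Proof.
move=> u0; pose g m := (u ^+ (n + m) * expY_scale u t)%:E.
transitivity (\int[P]_(w in B) g (Nincr s t w))%E.
  apply: eq_integral => w; rewrite inE => Bw.
  by rewrite expY_factor// /g /Nincr -(B_slice Bw) subnKC ?Nsum_homo.
rewrite (integral_nat_comp _ (Nincr_measurable s0 st) mB); last first.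
  by move=> m; rewrite lee_fin mulr_ge0 ?exprn_ge0 ?expR_ge0 ?ltW.
rewrite /pgf -nneseriesZl => [|m _]; last first.
  by rewrite lee_fin mulr_ge0 ?exprn_ge0 ?fine_ge0 ?measure_ge0 ?ltW.
apply: eq_eseriesr => m _.
have mBm := measurableI _ _ mB (Nincr_measurable s0 st m).
rewrite -[in RHS]EFinM (_ : _ * (u ^+ m * _) =
    u ^+ (n + m) * expY_scale u t * fine (P (B `&` [set w | Nincr s t w = m]))).
  by rewrite EFinM -(probability_fin P mBm).
by rewrite exprD; ring.
Qed.

Let integral_expY_now u : 0 < u ->
  (\int[P]_(w in B) (expY u s w)%:E = (u ^+ n * expY_scale u s)%:E * P B)%E.
Proof.
move=> u0; rewrite -integral_cst//; apply: eq_integral => w; rewrite inE => Bw.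
by rewrite expY_factor// (B_slice Bw).
Qed.

Lemma poisson_incr_indep_slice_iff :
  (forall u : R, 0 < u -> u <= 1 ->
     (\int[P]_(w in B) (expY u t w)%:E = \int[P]_(w in B) (expY u s w)%:E)%E) <->
  poisson_incr_indep s t B.
Proof.
pose a m := fine (P (B `&` [set w | Nincr s t w = m])).
pose b m := fine (P B) * poisson_mass (rate s t) m.
have mBm m : measurable (B `&` [set w | Nincr s t w = m]).
  exact: measurableI mB (Nincr_measurable s0 st m).
have rate0 := rate_ge0 st.
have integral_expY_now_pgf u : 0 < u ->
    (\int[P]_(w in B) (expY u s w)%:E = (u ^+ n * expY_scale u t)%:E * pgf b u)%E.
  move=> u0; rewrite integral_expY_now// /pgf.
  under eq_eseriesr do rewrite /b mulrCA EFinM.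
  rewrite nneseriesZl => [|m _]; last first.
    by rewrite lee_fin mulr_ge0 ?exprn_ge0 ?poisson_mass_ge0 ?(ltW u0).
  rewrite -poisson_pgf ?(ltW u0)// {1}(probability_fin P mB) muleA -!EFinM; congr EFin.
  have -> : expY_scale u s = expY_scale u t * expR (rate s t * (u - 1)).
    by rewrite /expY_scale -expRD /rate; congr expR; ring.
  by ring.
have poisson_incr_indep_pgf : poisson_incr_indep s t B <-> a =1 b.
  split=> [ABm m|ab m]; first by rewrite /a ABm (probability_fin P mB) -EFinM.
  rewrite (probability_fin P (mBm m)); have := ab m; rewrite /a /b => ->.
  by rewrite EFinM -(probability_fin P mB).
rewrite poisson_incr_indep_pgf; split=> [eqM|ab u u0 u1].
  apply: (@pgf_inj _ a b 1) => [m|m|||u u0 u1].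
  - by rewrite fine_ge0 ?measure_ge0.
  - by rewrite mulr_ge0 ?fine_ge0 ?measure_ge0 ?poisson_mass_ge0.
  - have e m : (a m)%:E = P (B `&` [set w | Nincr s t w = m]).
      exact/esym/probability_fin/mBm.
    under eq_eseriesr do rewrite e.
    rewrite -(measure_nat_partition P (Nincr_measurable s0 st) mB).
    exact: probability_le1.
  - under eq_eseriesr do rewrite /b EFinM.
    rewrite nneseriesZl => [|m _]; last by rewrite lee_fin poisson_mass_ge0.
    rewrite poisson_mass_sum// mule1 -(probability_fin P mB).
    exact: probability_le1.
  apply: (@EFin_mulIe _ (u ^+ n * expY_scale u t)).
    by rewrite mulf_neq0 ?expf_neq0 ?gt_eqF ?expR_gt0.
  by rewrite -integral_expY_later// -integral_expY_now_pgf// eqM.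
rewrite integral_expY_later// integral_expY_now_pgf//.
by congr (_ * pgf _ _)%E; apply/funext => m; exact: ab.
Qed.

End slice.

Lemma expY_Nsum u t : 0 < u ->
  expY u t = (fun k => u ^+ k * expY_scale u t) \o Nsum t.
Proof. by move=> u0; apply/funext => w; rewrite /= expY_factor. Qed.

Lemma expY_measurable u t (D : set T) : 0 < u -> nonneg_pt t ->
  measurable_fun D (fun w => (expY u t w)%:E).
Proof.
move=> u0 t0; rewrite expY_Nsum//.
exact: (measurable_fun_nat_comp (fun k => (u ^+ k * _)%:E) (Nsum_measurable t0)).
Qed.

Lemma martingale_eq_iff_poisson_incr_indep s t : nonneg_pt s -> pt_le s t ->
  (forall u : R, 0 < u -> u <= 1 -> forall A, joint_filtration N s A ->
     (\int[P]_(w in A) (expY u t w)%:E = \int[P]_(w in A) (expY u s w)%:E)%E) <->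
  (forall A, joint_filtration N s A -> poisson_incr_indep s t A).
Proof.
move=> s0 st; have t0 := nonneg_pt_le s0 st.
have slice_F A n : joint_filtration N s A ->
    joint_filtration N s (A `&` [set w | Nsum s w = n]).
  by move=> FA; apply: sigma_algebra_setI (joint_filtration_sigma s) _ _ FA _; apply: Nsum_adapted.
have slice_iff A n := fun FA => poisson_incr_indep_slice_iff s0 st
  (joint_filtration_measurable (slice_F A n FA)) (@subIsetr _ A [set w | Nsum s w = n]).
split=> [eqM A FA m|indep u u0 u1 A FA]; have mA := joint_filtration_measurable FA.
  have mAm := measurableI _ _ mA (Nincr_measurable s0 st m).
  rewrite (measure_nat_partition P (Nsum_measurable s0) mAm).
  rewrite (measure_nat_partition P (Nsum_measurable s0) mA) muleC.
  rewrite -nneseriesZl => [|n _]; last exact: measure_ge0.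
  apply: eq_eseriesr => n _; rewrite setIAC muleC.
  by apply: ((slice_iff A n FA).1 _ m) => v v0 v1; apply: eqM => //; exact: slice_F.
have expY_ge0 v w : A w -> (0 <= (expY u v w)%:E)%E by rewrite lee_fin expR_ge0.
rewrite (integral_nat_partition P (Nsum_measurable s0) mA (@expY_measurable u t A u0 t0));
  last exact: expY_ge0.
rewrite (integral_nat_partition P (Nsum_measurable s0) mA (@expY_measurable u s A u0 s0));
  last exact: expY_ge0.
apply: eq_eseriesr => n _; apply: ((slice_iff A n FA).2 _ u u0 u1).
by apply: indep; exact: slice_F.
Qed.

Lemma expY_integrable u t : 0 < u -> u <= 1 -> nonneg_pt t ->
  P.-integrable setT (fun w => (expY u t w)%:E).
Proof.
move=> u0 u1 t0; apply: (@measurable_bounded_integrable _ _ _ P (expY u t)) => //.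
- exact: le_lt_trans (probability_le1 P measurableT) (ltry 1).
- by rewrite expY_Nsum//; exact: measurable_fun_nat_comp (Nsum_measurable t0).
rewrite /bounded_near; near=> K => w _ /=.
rewrite expY_factor// ger0_norm; last by rewrite mulr_ge0 ?expR_ge0// exprn_ge0// ltW.
apply: (@le_trans _ _ (expY_scale u t)).
  exact: ler_piMl (expR_ge0 _) (exprn_ile1 _ (ltW u0) u1).
near: K; apply: nbhs_pinfty_ge; exact: num_real.
Unshelve. all: end_near.
Qed.

Lemma expY_adapted u t (B : set R) : 0 < u -> nonneg_pt t -> measurable B ->
  joint_filtration N t (expY u t @^-1` B).
Proof.
move=> u0 t0 mB; rewrite expY_Nsum//.
apply: (nat_measurable_preimage ((fun k => u ^+ k * _) @^-1` B) (joint_filtration_sigma t)).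
exact: Nsum_adapted t0 (pt_le_refl t).
Qed.

Lemma expY_martingale_iff :
  (forall u : R, 0 < u -> u <= 1 -> mp_martingale P (joint_filtration N) (expY u)) <->
  poisson_increments.
Proof.
split=> [mart s t s0 st|incr u u0 u1].
  apply: (martingale_eq_iff_poisson_incr_indep s0 st).1 => u u0 u1.
  by have [_ [_]] := mart u u0 u1; apply.
split; first by move=> t t0; exact: expY_integrable.
split; first by move=> t t0 B mB; exact: expY_adapted.
by move=> s t s0 st; apply: (martingale_eq_iff_poisson_incr_indep s0 st).2 => //; exact: incr.
Qed.

Lemma rate_sum s t : rate s t = \sum_(i < dim) L i * (t i - s i).
Proof. by rewrite /rate /pt_dot -sumrB; apply: eq_bigr => i _; rewrite mulrBr. Qed.

Lemma Nsum0 w : Nsum (fun=> 0) w = 0%N.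
Proof. by rewrite /Nsum big1// => i _; rewrite N0. Qed.

Lemma Nincr0 t w : Nincr (fun=> 0) t w = Nsum t w.
Proof. by rewrite /Nincr Nsum0 subn0. Qed.

Lemma rate0 t : rate (fun=> 0) t = pt_dot L t.
Proof. by rewrite rate_sum; apply: eq_bigr => i _; rewrite subr0. Qed.

Section from_poisson_increments.
Hypothesis incr : poisson_increments.

Lemma poisson_increments_law s t m : nonneg_pt s -> pt_le s t ->
  P [set w | Nincr s t w = m] = (poisson_mass (rate s t) m)%:E.
Proof.
move=> s0 st; have := incr s0 st (sigma_algebra_setT (joint_filtration_sigma s)) m.
by rewrite setTI probability_setT mul1e.
Qed.

Lemma poisson_increments_indep s t A (B : set nat) : nonneg_pt s -> pt_le s t ->
  joint_filtration N s A ->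
  P (A `&` Nincr s t @^-1` B) = (P A * P (Nincr s t @^-1` B))%E.
Proof.
move=> s0 st FA.
apply: (indep_nat_preimage (Nincr_measurable s0 st) (joint_filtration_measurable FA)) => k.
by rewrite incr// poisson_increments_law.
Qed.

Lemma poisson_increments_chain m (c : nat -> 'I_dim -> R) (B : nat -> set nat) :
  c 0%N = (fun=> 0) -> (forall k, (k < m)%N -> pt_lt (c k) (c k.+1)) ->
  P [set w | forall k, (k < m)%N -> B k (Nincr (c k) (c k.+1) w)] =
  (\prod_(k < m) P (Nincr (c k) (c k.+1) @^-1` B k))%E.
Proof.
move=> c0 chain; pose E j := [set w | forall k, (k < j)%N -> B k (Nincr (c k) (c k.+1) w)].
suff /(_ m (leqnn m))[_ _ //] : forall j, (j <= m)%N -> [/\ nonneg_pt (c j),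
    joint_filtration N (c j) (E j) &
    P (E j) = (\prod_(k < j) P (Nincr (c k) (c k.+1) @^-1` B k))%E].
elim=> [_|j IH jm].
  have -> : E 0%N = setT by apply/seteqP; split=> w.
  rewrite c0 probability_setT big_ord0; split=> //.
  exact: sigma_algebra_setT (joint_filtration_sigma _).
have [cj0 FE PE] := IH (ltnW jm); have [st _] := chain j jm.
have -> : E j.+1 = E j `&` Nincr (c j) (c j.+1) @^-1` B j.
  apply/seteqP; split=> [w Ew|w [Ew Bw] k].
    by split=> [k kj|]; apply: Ew => //; rewrite ltnS ltnW.
  by rewrite ltnS leq_eqVlt => /orP[/eqP->//|]; exact: Ew.
split; first exact: nonneg_pt_le cj0 st.
  apply: sigma_algebra_setI (joint_filtration_sigma _) _ _ (joint_filtration_homo st FE) _.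
  exact: nat_measurable_preimage (joint_filtration_sigma _) (Nincr_adapted cj0 st).
by rewrite poisson_increments_indep// PE big_ord_recr.
Qed.

Lemma mp_poisson_of_poisson_increments : mp_poisson P L Nsum.
Proof.
split; first by move=> t k t0; exact: Nsum_measurable.
split; first exact: Nsum0.
split; first by move=> w s t s0 st; exact: Nsum_homo.
split.
  move=> m c c0 chain B.
  pose B' k := if @insub _ (fun k => k < m)%N 'I_m k is Some k' then B k' else setT.
  have eB (k : 'I_m) : B' k = B k by rewrite /B' valK.
  have := poisson_increments_chain B' c0 chain.
  rewrite (eq_bigr (fun k : 'I_m => P (Nincr (c k) (c k.+1) @^-1` B k))) => [<-|k _]; last first.
    by rewrite eB.
  congr (P _); apply/seteqP; split=> w Ew k.
    by move=> km; rewrite -[k]/(val (Ordinal km)) eB; exact: Ew.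
  by move=> _; rewrite -eB; exact: Ew.
split.
  move=> s t s' t' s0 st s0' st' e; apply: eq_distribution_nat.
  - exact: Nincr_measurable.
  - exact: Nincr_measurable.
  move=> k; rewrite !poisson_increments_law// !rate_sum.
  by under eq_bigr do rewrite e.
move=> t k t0; have := poisson_increments_law k (fun i => lexx 0) t0.
by under eq_set do rewrite Nincr0; rewrite rate0.
Qed.

End from_poisson_increments.

Definition axis (i : 'I_dim) (r : R) : 'I_dim -> R := fun j => if j == i then r else 0.

Lemma Nsum_axis i r w : Nsum (axis i r) w = N i r w.
Proof.
rewrite /Nsum (bigD1 i)//= /axis eqxx big1 ?addn0// => j ji.
by rewrite (negbTE ji) N0.
Qed.

Lemma axis_lt i r r' : r < r' -> pt_lt (axis i r) (axis i r').
Proof.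
move=> rr'; split=> [j|/(congr1 (fun f => f i))]; rewrite /axis.
  by case: eqP => // _; exact: ltW.
by rewrite eqxx => err'; move: rr'; rewrite err' ltxx.
Qed.

Definition cyl_event i (l : seq (R * set nat)) := [set w | cyl_holds l (N i ^~ w)].

Definition past_event s A := exists l : 'I_dim -> seq (R * set nat),
  (forall i, {in [seq y.1 | y <- l i], forall r, 0 <= r <= s i}) /\
  A = \bigcap_(i in setT) cyl_event i (l i).

Lemma past_event_filtration s : past_event s `<=` joint_filtration N s.
Proof.
move=> _ [l [l_pos ->]]; apply: (sigma_algebra_bigcap_count (joint_filtration_sigma s)) => i.
apply: cyl_holds_measurable (joint_filtration_sigma s) _ => r /l_pos /andP[r0 rs].
exact: N_adapted.
Qed.

Lemma past_event_setT s : past_event s setT.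
Proof.
by exists (fun=> [::]); split=> // ; apply/seteqP; split=> // w _ i.
Qed.

Lemma past_event_setI s : setI_closed (past_event s).
Proof.
move=> _ _ [l1 [l1_pos ->]] [l2 [l2_pos ->]]; exists (fun i => l1 i ++ l2 i); split.
  by move=> i r; rewrite map_cat mem_cat => /orP[/l1_pos|/l2_pos].
apply/seteqP; split=> w /=.
  by move=> [h1 h2] i _; apply/cyl_holds_cat; split; [exact: h1|exact: h2].
by move=> h; split=> i _; have /cyl_holds_cat[] := h i I.
Qed.

Lemma past_event_generators s : [set A | exists i r (B : set nat),
  0 <= r /\ r <= s i /\ A = N i r @^-1` B] `<=` past_event s.
Proof.
move=> _ [i [r [B [r0 [rs ->]]]]].
exists (fun j => if j == i then [:: (r, B)] else [::]); split.
  move=> j y; case: eqP => [->|_]//=; rewrite inE => /eqP->; exact/andP.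
apply/seteqP; split=> w /=; first by move=> Bw j _; case: eqP => [->|].
by move=> h; have := h i I; rewrite eqxx => -[].
Qed.

Section from_mp_poisson.
Hypothesis poisson : mp_poisson P L Nsum.

Lemma axis_chain_indep i n (g : nat -> R) : g 0%N = 0 ->
  (forall j, (j <= n)%N -> g j < g j.+1) ->
  independent_rvs P (fun (k : 'I_n.+1) w => (N i (g k.+1) w - N i (g k) w)%N).
Proof.
move=> g0 g_lt; have [_ [_ [_ [chain _]]]] := poisson.
have -> : (fun (k : 'I_n.+1) w => (N i (g k.+1) w - N i (g k) w)%N) =
    (fun (k : 'I_n.+1) w => (Nsum (axis i (g k.+1)) w - Nsum (axis i (g k)) w)%N).
  by apply/funext => k; apply/funext => w; rewrite !Nsum_axis.
apply: (chain n.+1 (fun j => axis i (g j))) => [|k kn]; last exact/axis_lt/g_lt.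
by apply/funext => j; rewrite /axis g0; case: ifP.
Qed.

Lemma axis_increment_indep i a b (l : seq (R * set nat)) k : 0 <= a -> a <= b ->
  {in [seq y.1 | y <- l], forall r, 0 <= r <= a} ->
  P ([set w | (N i b w - N i a w)%N = k] `&` cyl_event i l) =
  (P [set w | (N i b w - N i a w)%N = k] * P (cyl_event i l))%E.
Proof.
move=> a0 ab l_pos; have [<-|a_neq_b] := eqVneq a b.
  by under eq_set do rewrite subnn; exact: const_event_indep.
have [a_eq0|a_neq0] := eqVneq a 0.
  have cyl_const w : cyl_holds l (N i ^~ w) = cyl_holds l (fun=> 0%N).
    apply: eq_cyl_holds => r /l_pos; rewrite a_eq0 => /andP[r0 r_le0].
    have -> : r = 0 by apply/le_anti; rewrite r0 r_le0.
    exact: N0.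
  have -> : cyl_event i l = [set _ | cyl_holds l (fun=> 0%N)].
    by apply/funext => w; exact: cyl_const.
  by rewrite setIC muleC; exact: const_event_indep.
(* The values of N_i at the positions of l and its increment over (a, b] are
   functions of the increments of S along an axis chain through those points. *)
have a_gt0 : 0 < a by rewrite lt_neqAle eq_sym a_neq0.
have a_lt_b : a < b by rewrite lt_neqAle a_neq_b.
have [n [g [idx [g0 gn gn1 g_lt g_idx]]]] := strict_grid a_gt0 a_lt_b l_pos.
pose X j w := (N i (g j.+1) w - N i (g j) w)%N.
have g_ge0 j : (j <= n.+1)%N -> 0 <= g j.
  elim: j => [|j IH jn]; first by rewrite g0.
  by apply: le_trans (IH (ltnW jn)) (ltW (g_lt j _)).
have mX j : (j <= n)%N -> nat_measurable measurable (X j).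
  move=> jn; apply: (nat_measurable_op2 subn (sigma_algebra_measurable T)).
    by apply/N_measurable/g_ge0.
  by apply/N_measurable/g_ge0/ltnW.
have N_telescope j w : (j <= n.+1)%N -> N i (g j) w = (\sum_(m < j) X m w)%N.
  elim: j => [_|j IH jn]; first by rewrite g0 N0 big_ord0.
  have jn' : (j <= n)%N by rewrite -ltnS.
  rewrite big_ord_recr /= -IH ?(ltnW jn)// /X subnKC//.
  exact: N_homo (g_ge0 _ (ltnW jn)) (ltW (g_lt _ jn')).
pose C x := cyl_holds l (fun r => \sum_(m < idx r) nth 0%N x m)%N.
have -> : cyl_event i l = [set w | C (mkseq (X ^~ w) n)].
  apply/funext => w; rewrite /C; apply: eq_cyl_holds.
  move=> r /g_idx [rn gr]; rewrite /= -{1}gr (N_telescope _ _ (leqW rn)).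
  by apply: eq_bigr => m _; rewrite (nth_mkseq _ _ (leq_trans (ltn_ord m) rn)).
have -> : [set w | (N i b w - N i a w)%N = k] = X n @^-1` [set k] by rewrite /X gn gn1.
by rewrite setIC (independent_rvs_prefix mX (axis_chain_indep i g0 g_lt)) muleC.
Qed.

Hypothesis indepN : independent_processes P N.

Let process_sigmaP i : sigma_algebra setT (process_sigma (N i)).
Proof. exact: smallest_sigma_algebra. Qed.

Let N_process i r : 0 <= r -> nat_measurable (process_sigma (N i)) (N i r).
Proof. by move=> r0 k; apply: sub_sigma_algebra; exists r, [set k]. Qed.

Definition coord_incr s t i w := (N i (t i) w - N i (s i) w)%N.

Lemma increments_cylinders_indep s t (f : 'I_dim -> nat)
    (l : 'I_dim -> seq (R * set nat)) : nonneg_pt s -> pt_le s t ->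
  (forall i, {in [seq y.1 | y <- l i], forall r, 0 <= r <= s i}) ->
  P ((\bigcap_(i in setT) [set w | coord_incr s t i w = f i]) `&`
     \bigcap_(i in setT) cyl_event i (l i)) =
  (P (\bigcap_(i in setT) [set w | coord_incr s t i w = f i]) *
   P (\bigcap_(i in setT) cyl_event i (l i)))%E.
Proof.
move=> s0 st l_pos.
have incr_process i : nat_measurable (process_sigma (N i)) (coord_incr s t i).
  apply: (nat_measurable_op2 subn (process_sigmaP i)); apply: N_process => //.
  exact: le_trans (s0 i) (st i).
have cyl_process i : process_sigma (N i) (cyl_event i (l i)).
  apply: (cyl_holds_measurable (process_sigmaP i)) => r /l_pos /andP[r0 _].
  exact: N_process.
rewrite (_ : _ `&` _ =
    \bigcap_(i in setT) ([set w | coord_incr s t i w = f i] `&` cyl_event i (l i))); last first.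
  apply/seteqP; split=> w; first by move=> [h1 h2] i _; split; [exact: h1|exact: h2].
  by move=> h; split=> i _; case: (h i I).
rewrite !indepN // => [|i|i]; last 2 first.
- exact: incr_process.
- by apply: (sigma_algebra_setI (process_sigmaP i)); [exact: incr_process|exact: cyl_process].
rewrite -big_split /=; apply: eq_bigr => i _.
exact: axis_increment_indep (s0 i) (st i) (l_pos i).
Qed.

Lemma Nincr_coord s t w : nonneg_pt s -> pt_le s t ->
  Nincr s t w = (\sum_(i < dim) coord_incr s t i w)%N.
Proof. by move=> s0 st; rewrite /Nincr /Nsum sumnB// => i _; exact: N_homo. Qed.

Lemma past_event_incr_indep s t m A : nonneg_pt s -> pt_le s t -> past_event s A ->
  P (A `&` [set w | Nincr s t w = m]) = (P A * P [set w | Nincr s t w = m])%E.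
Proof.
move=> s0 st pA; have [l [l_pos eA]] := pA.
have mA := joint_filtration_measurable (past_event_filtration pA).
have m_incr i : nat_measurable measurable (coord_incr s t i).
  apply: (nat_measurable_op2 subn (sigma_algebra_measurable T)); apply: N_measurable => //.
  exact: le_trans (s0 i) (st i).
pose E (f : {ffun 'I_dim -> 'I_m.+1}) := [set _ | (\sum_(i < dim) f i)%N = m] `&`
  \bigcap_(i in setT) [set w | coord_incr s t i w = f i].
have -> : [set w | Nincr s t w = m] = \bigcup_(f in setT) E f.
  apply/seteqP; split=> w /=; rewrite Nincr_coord//; last first.
    by move=> [f _ [fm fw]]; rewrite -fm; apply: eq_bigr => i _; exact: (fw i I).
  move=> wm; have incr_lt i : (coord_incr s t i w < m.+1)%N.
    by rewrite ltnS -wm (bigD1 i)//= leq_addr.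
  exists [ffun i => Ordinal (incr_lt i)] => //; split=> [|i _]; last by rewrite ffunE.
  by rewrite -[in RHS]wm; apply: eq_bigr => i _; rewrite ffunE.
have mE f : measurable (E f).
  apply: measurableI; first exact: (sigma_algebra_const (sigma_algebra_measurable T)).
  by apply: (sigma_algebra_bigcap_count (sigma_algebra_measurable T)) => i; exact: m_incr.
have tE : trivIset setT E.
  move=> f g _ _ [w [[_ fw] [_ gw]]].
  by apply/ffunP => i; apply: val_inj; rewrite /= -(fw i I) -(gw i I).
have EA f : P (E f `&` A) = (P (E f) * P A)%E.
  rewrite /E -setIA !const_event_indep -muleA eA.
  by rewrite increments_cylinders_indep.
by rewrite setIC (bigcup_indep mE mA tE EA) muleC.
Qed.

Lemma mp_poisson_incr_law s t m : nonneg_pt s -> pt_le s t ->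
  P [set w | Nincr s t w = m] = (poisson_mass (rate s t) m)%:E.
Proof.
move=> s0 st; have [_ [_ [_ [_ [stationary marginal]]]]] := poisson.
pose r i := t i - s i; have r0 : nonneg_pt r by move=> i; rewrite subr_ge0.
have -> : P [set w | Nincr s t w = m] = P [set w | Nincr (fun=> 0) r w = m].
  exact: stationary s t _ r s0 st (fun=> lexx 0) r0 (fun i => esym (subr0 (r i))) [set m].
by under eq_set do rewrite Nincr0; rewrite marginal// rate_sum.
Qed.

Lemma filtration_incr_indep s t m A : nonneg_pt s -> pt_le s t ->
  joint_filtration N s A ->
  P (A `&` [set w | Nincr s t w = m]) = (P A * P [set w | Nincr s t w = m])%E.
Proof.
move=> s0 st FA; have mD := Nincr_measurable s0 st m.
pose c := fine (P [set w | Nincr s t w = m]).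
have c0 : 0 <= c by rewrite fine_ge0 ?measure_ge0.
have past_measurable : past_event s `<=` measurable.
  by move=> B /past_event_filtration /joint_filtration_measurable.
have cover : \bigcup_(k : nat) setT = [set: T] by apply/seteqP; split=> // w _; exists 0%N.
have agree B : past_event s B -> mrestr P mD B = mscale (NngNum c0) P B.
  move=> pB; rewrite /mrestr /mscale /= past_event_incr_indep//.
  by rewrite /c -probability_fin// muleC.
have finite (k : nat) : (mrestr P mD setT < +oo)%E.
  by rewrite /mrestr setTI (le_lt_trans (probability_le1 P mD)) ?ltry.
have FA' : <<s past_event s >> A := sub_sigma_algebra2 (past_event_generators (s := s)) FA.
have -> : P (A `&` [set w | Nincr s t w = m]) = (c%:E * P A)%E.
  exact: @g_sigma_algebra_measure_unique _ _ T (past_event s) past_measurable (fun=> setT)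
    (fun=> @past_event_setT s) cover _ _ (@past_event_setI s) agree finite A FA'.
by rewrite /c -probability_fin// muleC.
Qed.

Lemma poisson_increments_of_mp_poisson : poisson_increments.
Proof.
by move=> s t s0 st A FA m; rewrite filtration_incr_indep// mp_poisson_incr_law.
Qed.

End from_mp_poisson.

End counting_processes.

Theorem mainTheorem17 (dsp : measure_display) (T : measurableType dsp)
  (R : realType) (P : probability T R) (dim : nat)
  (N : 'I_dim -> R -> T -> nat) (L : 'I_dim -> R) :
  (0 < dim)%N ->
  (forall i, simple_counting_process (N i)) ->
  independent_processes P N ->
  (forall i, 0 < L i) ->
  (forall u : R, 0 < u -> u <= 1 ->
     mp_martingale P (joint_filtration N)
       (fun t w => expR ((\sum_(i < dim) (N i (t i) w)%:R * ln u)
                         - pt_dot L t * (u - 1))))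
  <->
  mp_poisson P L (fun t w => (\sum_(i < dim) N i (t i) w)%N).
Proof.
move=> _ N_counting indepN L_gt0; have L_ge0 i := ltW (L_gt0 i).
rewrite (expY_martingale_iff P N_counting L_ge0).
split; first exact: mp_poisson_of_poisson_increments.
by move=> poisson; apply: poisson_increments_of_mp_poisson.
Qed.
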